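(* Let $C$ be an $(\epsilon,\delta)$-AWTP code of length $N$ over alphabet $\Sigma$ for a $(\rho_r,\rho_w)$-AWTP channel, with $\epsilon>0$ sufficiently small, and let the message $M$ be uniformly distributed on $\mathcal M$. Let $S_r^1\subseteq[N]$ with $|S_r^1|=\rho_rN$ be a read set of the adversary strategy described in the context, and let $C_{S_r^1}$ be the random variable given by the components of the codeword $\mathsf{Enc}(M)$ on $S_r^1$. Then \[ \mathsf H(M)-\mathsf H(M\mid C_{S_r^1})\le 2\epsilon\rho_rN\log\frac{|\Sigma|}{\epsilon}. \]
   Context: Definitions of $(\rho_r,\rho_w)$-AWTP channel and $(\epsilon,\delta)$-AWTP code: $\Sigma$ finite additive group, $[N]=\{1,\dots,N\}$; the adversary chooses a read set $S_r$ with $|S_r|\le\rho_rN$ and sees the codeword on $S_r$, and a write set $S_w$ with $|S_w|\le\rho_wN$ and adds an error vector supported in $S_w$; secrecy means the statistical distance between adversary views for any two messages is at most $\epsilon$, reliability means decoding error probability at most $\delta$. The adversary strategy considered: before transmission the adversary fixes two pairs $(S_r^i,S_w^i)$, $i=1,2$, with $|S_r^i|=\rho_rN$, $|S_w^i|=\rho_wN$, $|S_r^i\cup S_w^i|=\rho N$ for some $0\le\rho\le1$, and $S_r^1\cap S_w^2=\emptyset$; it chooses pair $i$ with probability $1/2$, reads the codeword on $S_r^i$, and adds a uniformly random error on the positions of $S_w^i$. $\log$ is base 2 and $\mathsf H$ denotes Shannon entropy. *)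

From HB Require Import structures.
From mathcomp Require Import all_boot all_algebra.
From Stdlib Require Import Reals.

Set Implicit Arguments.
Unset Strict Implicit.
Unset Printing Implicit Defensive.

Lemma Rplus_assoc_ssr : associative Rplus.
Proof. by move=> x y z; rewrite Rplus_assoc. Qed.
HB.instance Definition _ :=
  Monoid.isComLaw.Build R R0 Rplus Rplus_assoc_ssr Rplus_comm Rplus_0_l.

Local Open Scope R_scope.

Definition rsum (T : finType) (f : T -> R) : R := \big[Rplus/R0]_(t : T) f t.

Definition log2 (x : R) : R := ln x / ln 2.

Definition xlogx (x : R) : R := if Rle_dec x 0 then 0 else x * log2 x.

Definition entropy (T : finType) (p : T -> R) : R := - rsum (fun t => xlogx (p t)).

Definition is_pmf (T : finType) (p : T -> R) : Prop :=
  (forall t, 0 <= p t) /\ rsum p = 1.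

Definition marg2 (A B : finType) (p : A -> B -> R) (b : B) : R := rsum (fun a => p a b).
Definition cond_entropy (A B : finType) (p : A -> B -> R) : R :=
  rsum (fun b => marg2 p b * entropy (fun a => p a b / marg2 p b)).

Definition stat_dist (T : finType) (p q : T -> R) : R :=
  / 2 * rsum (fun t => Rabs (p t - q t)).

Definition word (Sigma : finZmodType) (N : nat) := {ffun 'I_N -> Sigma}.

(* The codeword seen on a read set S (other positions masked by 0). *)
Definition restrict (Sigma : finZmodType) (N : nat) (S : {set 'I_N}) (c : word Sigma N)
  : word Sigma N := [ffun i => if i \in S then c i else GRing.zero].

(* Randomized encoder: Enc m is the distribution of Enc(m) on codewords.
   Distribution of the adversary's view (Enc(m) restricted to S). *)
Definition view_dist (Sigma : finZmodType) (N : nat) (Msg : finType)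
  (Enc : Msg -> word Sigma N -> R) (S : {set 'I_N}) (m : Msg) (v : word Sigma N) : R :=
  \big[Rplus/R0]_(c : word Sigma N | restrict S c == v) Enc m c.

Definition awtp_secret (Sigma : finZmodType) (N : nat) (Msg : finType)
  (Enc : Msg -> word Sigma N -> R) (rho_r eps : R) : Prop :=
  forall (S : {set 'I_N}) (m m' : Msg),
    INR #|S| <= rho_r * INR N ->
    stat_dist (view_dist Enc S m) (view_dist Enc S m') <= eps.

(* A (deterministic) adversary: read set S_r with |S_r| <= rho_r N, write set
   S_w with |S_w| <= rho_w N, and an error function f which depends only on
   the codeword on S_r and is supported in S_w. (Randomized adversaries are
   mixtures of these.) *)
Definition valid_adversary (Sigma : finZmodType) (N : nat) (rho_r rho_w : R)
  (Sr Sw : {set 'I_N}) (f : word Sigma N -> word Sigma N) : Prop :=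
  INR #|Sr| <= rho_r * INR N /\ INR #|Sw| <= rho_w * INR N /\
  (forall c c', restrict Sr c = restrict Sr c' -> f c = f c') /\
  (forall c i, i \notin Sw -> f c i = GRing.zero).

Definition awtp_reliable (Sigma : finZmodType) (N : nat) (Msg : finType)
  (Enc : Msg -> word Sigma N -> R) (Dec : word Sigma N -> Msg) (rho_r rho_w delta : R)
  : Prop :=
  forall Sr Sw f, valid_adversary rho_r rho_w Sr Sw f ->
  forall m : Msg,
    \big[Rplus/R0]_(c : word Sigma N | Dec (GRing.add c (f c)) != m) Enc m c <= delta.

Definition awtp_code (Sigma : finZmodType) (N : nat) (Msg : finType)
  (Enc : Msg -> word Sigma N -> R) (Dec : word Sigma N -> Msg)
  (rho_r rho_w eps delta : R) : Prop :=
  (forall m, is_pmf (Enc m)) /\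
  awtp_secret Enc rho_r eps /\
  awtp_reliable Enc Dec rho_r rho_w delta.

Definition unif (Msg : finType) (m : Msg) : R := / INR #|Msg|.
Definition joint_MC (Sigma : finZmodType) (N : nat) (Msg : finType)
  (Enc : Msg -> word Sigma N -> R) (S : {set 'I_N}) (m : Msg) (v : word Sigma N) : R :=
  unif m * view_dist Enc S m v.

From HB Require Import structures.
From mathcomp Require Import all_boot all_algebra.
From Stdlib Require Import Reals Lra.
Set Implicit Arguments.
Unset Strict Implicit.
Unset Printing Implicit Defensive.
Local Open Scope R_scope.

(* Write p_m for the law of the view of Enc(m) on S and q = avg_m p_m for the
   law of the view under a uniform message.  Then (in nats)
     I(M; C_S) = avg_m D(p_m || q).
   Each divergence is compared with D(p_m || r) for the smoothed reference
   r = (1 - eps) q + eps * (uniform law on the K words supported in S); the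
   correction terms sum to zero because r and q are both distributions.  Since
   r >= (1 - eps) q everywhere and r >= eps / K on the support of p_m, the part
   of p_m below q costs at most -ln(1 - eps) and the excess (p_m - q)^+, whose
   mass is at most eps by secrecy, costs at most 1 + ln(K/eps).  With
   K <= |Sigma|^|S| and eps <= e^-3 this gives the stated bound; an empty read
   set leaks nothing. *)

Section RealSums.
Context {I : Type} {r : seq I} {P : pred I}.

Lemma sumR_mull (c : R) (F : I -> R) :
  \big[Rplus/R0]_(i <- r | P i) (c * F i) = c * \big[Rplus/R0]_(i <- r | P i) F i.
Proof. by elim/big_rec2: _ => [|i x y _ ->]; ring. Qed.

Lemma sumR_opp (F : I -> R) :
  \big[Rplus/R0]_(i <- r | P i) (- F i) = - \big[Rplus/R0]_(i <- r | P i) F i.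
Proof. by elim/big_rec2: _ => [|i x y _ ->]; ring. Qed.

Lemma sumR_sub (F G : I -> R) :
  \big[Rplus/R0]_(i <- r | P i) (F i - G i) =
  \big[Rplus/R0]_(i <- r | P i) F i - \big[Rplus/R0]_(i <- r | P i) G i.
Proof. by elim/big_rec3: _ => [|i x y z _ ->]; ring. Qed.

Lemma sumR_le (F G : I -> R) :
  (forall i, P i -> F i <= G i) ->
  \big[Rplus/R0]_(i <- r | P i) F i <= \big[Rplus/R0]_(i <- r | P i) G i.
Proof. by move=> FG; elim/big_ind2: _ => // *; lra. Qed.

Lemma sumR_ge0 (F : I -> R) :
  (forall i, P i -> 0 <= F i) -> 0 <= \big[Rplus/R0]_(i <- r | P i) F i.
Proof. by move=> F0; elim/big_ind: _ => // *; lra. Qed.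

Lemma sumR_pos_part (F : I -> R) :
  Rmax (\big[Rplus/R0]_(i <- r | P i) F i) 0 <=
  \big[Rplus/R0]_(i <- r | P i) Rmax (F i) 0.
Proof.
elim/big_ind2: _ => [|x1 x2 y1 y2 le1 le2|i _]; last lra.
  by rewrite Rmax_right; lra.
have := Rmax_l x2 0; have := Rmax_r x2 0; have := Rmax_l y2 0; have := Rmax_r y2 0.
by move=> *; apply: Rmax_lub; lra.
Qed.

End RealSums.

Lemma sumR_const (T : finType) (P : pred T) (c : R) :
  \big[Rplus/R0]_(t | P t) c = INR #|P| * c.
Proof.
rewrite big_const; elim: #|_| => [|n IH] /=; first ring.
by rewrite IH; case: n {IH} => [|n] /=; ring.
Qed.

Lemma sumR_uniform (T : finType) (c : R) :
  0 < INR #|T| -> \big[Rplus/R0]_(t : T) (/ INR #|T| * c) = c.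
Proof.
move=> T_gt0; transitivity (INR #|T| * (/ INR #|T| * c)); first exact: sumR_const.
by field; lra.
Qed.

Lemma stat_dist_pos_part (T : finType) (p p' : T -> R) :
  rsum p = 1 -> rsum p' = 1 ->
  \big[Rplus/R0]_(t : T) Rmax (p t - p' t) 0 = stat_dist p p'.
Proof.
rewrite /stat_dist /rsum => p_sum p'_sum.
rewrite (eq_bigr (fun t => / 2 * (Rabs (p t - p' t) + (p t - p' t)))); last first.
  move=> t _; rewrite /Rmax; case: Rle_dec => le_pp'.
  - by rewrite Rabs_left1 //; ring.
  - by rewrite Rabs_right; [field | lra].
by rewrite sumR_mull big_split /= sumR_sub p_sum p'_sum; ring.
Qed.

Lemma ln2_pos : 0 < ln 2.
Proof. by have := ln_lt_2; lra. Qed.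

Lemma ln_le_ln {x y : R} : 0 < x -> x <= y -> ln x <= ln y.
Proof. by move=> x_gt0 [lt_xy|->]; [left; apply: ln_increasing | lra]. Qed.

Lemma ln_le_sub1 {x : R} : 0 < x -> ln x <= x - 1.
Proof. by move=> x_gt0; have := exp_ineq1_le (ln x); rewrite exp_ln //; lra. Qed.

Lemma ln_div x y : 0 < x -> 0 < y -> ln (x / y) = ln x - ln y.
Proof.
move=> x_gt0 y_gt0; have := Rinv_0_lt_compat _ y_gt0 => iy_gt0.
by rewrite /Rdiv ln_mult // ln_Rinv //; ring.
Qed.

Lemma le_div_r a b c : 0 < c -> a * c <= b -> a <= b / c.
Proof.
move=> c_gt0 le_acb; apply: (Rmult_le_reg_r c) => //.
by rewrite /Rdiv Rmult_assoc Rinv_l; lra.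
Qed.

Lemma neg_ln_one_minus_le x : 0 <= x <= / 2 -> - ln (1 - x) <= 2 * x.
Proof.
move=> x_bd; have x1_gt0 : 0 < 1 - x by lra.
have := ln_le_sub1 (Rinv_0_lt_compat _ x1_gt0); rewrite ln_Rinv //.
have -> : / (1 - x) - 1 = x / (1 - x) by field; lra.
suff : x / (1 - x) <= 2 * x by lra.
apply: (Rmult_le_reg_r (1 - x)) => //.
rewrite /Rdiv Rmult_assoc Rinv_l; nra.
Qed.

(* e^-3 <= 1/4, so that eps <= e^-3 keeps eps away from 1. *)
Lemma exp_m3_le : exp (-3) <= / 4.
Proof.
have e3 : exp (-3) * exp 3 = 1 by rewrite -exp_plus (_ : -3 + 3 = 0) ?exp_0 //; ring.
have := exp_ineq1_le 3; have := exp_pos (-3); nra.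
Qed.

Definition kl_term (p q : R) : R := if Rlt_dec 0 p then p * ln (p / q) else 0.

(* Changing the reference point of a divergence term: ln(r/q) <= r/q - 1. *)
Lemma kl_term_change_ref p q r : 0 < p -> 0 < q -> 0 < r ->
  kl_term p q <= kl_term p r + p * (r / q - 1).
Proof.
move=> p_gt0 q_gt0 r_gt0; rewrite /kl_term; case: Rlt_dec => //= _.
have le_rq := ln_le_sub1 (Rdiv_lt_0_compat _ _ r_gt0 q_gt0).
have le_prq := Rmult_le_compat_l _ _ _ (Rlt_le _ _ p_gt0) le_rq.
rewrite !ln_div // in le_prq *; lra.
Qed.

(* Divergence term against a smoothed reference r, which dominates (1 - lam) q
   everywhere and lam / K at the point considered: the part of p below q costs
   -ln(1 - lam), the excess over q costs 1 + ln(K / lam). *)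
Lemma kl_term_smoothed_le p q r lam K :
  0 < p <= 1 -> 0 < q -> 0 < lam < 1 -> 0 < K ->
  (1 - lam) * q <= r -> lam / K <= r ->
  kl_term p r <= Rmin p q * (- ln (1 - lam)) + Rmax (p - q) 0 * (1 + ln (K / lam)).
Proof.
move=> p_bd q_gt0 lam_bd K_gt0 r_ge_q r_ge_unif.
have r_gt0 : 0 < r by nra.
rewrite /kl_term; case: (Rlt_dec 0 p) => [p_gt0|p_le0] /=; last lra.
have q_vs_r : ln q - ln r <= - ln (1 - lam).
  suff : ln q <= ln (r / (1 - lam)) by rewrite ln_div //; lra.
  by apply: ln_le_ln => //; apply: le_div_r; lra.
have p_vs_r : ln p - ln r <= ln (K / lam).
  rewrite -ln_div //; apply: ln_le_ln; first exact: Rdiv_lt_0_compat.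
  have inv_r : / r <= K / lam.
    rewrite -(Rinv_div lam K); apply: Rinv_le_contravar => //.
    by apply: Rdiv_lt_0_compat; lra.
  have := Rinv_0_lt_compat _ r_gt0; rewrite /Rdiv in inv_r *; nra.
rewrite ln_div //.
case: (Rle_dec p q) => [le_pq|lt_qp].
- rewrite Rmin_left // Rmax_right; last lra.
  have le_ln := ln_le_ln (proj1 p_bd) le_pq.
  rewrite Rmult_0_l Rplus_0_r; apply: Rmult_le_compat_l; lra.
- rewrite Rmin_right ?Rmax_left; try lra.
  have p_vs_q := ln_le_sub1 (Rdiv_lt_0_compat _ _ (proj1 p_bd) q_gt0).
  rewrite ln_div in p_vs_q; try lra.
  have q_pos := Rlt_le _ _ q_gt0; have pq_pos : 0 <= p - q by lra.
  have low := Rmult_le_compat_l _ _ _ q_pos p_vs_q.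
  have mid := Rmult_le_compat_l _ _ _ q_pos q_vs_r.
  have high := Rmult_le_compat_l _ _ _ pq_pos p_vs_r.
  have qpq : q * (p / q - 1) = p - q by field; lra.
  rewrite qpq in low; nra.
Qed.

Lemma kl_term_le p q r lam K :
  0 <= p <= 1 -> 0 <= q -> (0 < p -> 0 < q) -> 0 < lam < 1 -> 0 < K ->
  (1 - lam) * q <= r -> (0 < p -> lam / K <= r) ->
  kl_term p q <= Rmin p q * (- ln (1 - lam)) + Rmax (p - q) 0 * (1 + ln (K / lam))
                 + p * (r / q - 1).
Proof.
move=> p_bd q_ge0 q_pos lam_bd K_gt0 r_ge_q r_ge_unif.
have [p_gt0|->] : 0 < p \/ p = 0 by lra.
- have q_gt0 := q_pos p_gt0; have r_gt0 : 0 < r by nra.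
  have := kl_term_change_ref p_gt0 q_gt0 r_gt0.
  have := kl_term_smoothed_le (conj p_gt0 (proj2 p_bd)) q_gt0 lam_bd K_gt0 r_ge_q
            (r_ge_unif p_gt0).
  lra.
- rewrite /kl_term Rmin_left // Rmax_right; last lra.
  by case: (Rlt_dec 0 0) => /= [|_]; lra.
Qed.

(* Where q vanishes the correction term vanishes too, so summing q (r/q - 1)
   is bounded by the difference of the total masses. *)
Lemma mul_ratio_sub1_le q r : 0 <= q -> 0 <= r -> q * (r / q - 1) <= r - q.
Proof.
move=> q_ge0 r_ge0; have [q_gt0|->] : 0 < q \/ q = 0 by lra.
- by right; field; lra.
- by rewrite Rmult_0_l; lra.
Qed.

(* One summand of H(M) - H(M | C) for a uniform M on U messages: a joint
   probability u p of a (message, view) pair whose view has probability q. *)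
Lemma entropy_term U p q : 0 < U -> 0 <= p -> / U * p <= q ->
  log2 U * (/ U * p) + q * xlogx (/ U * p / q) = / ln 2 * (/ U * kl_term p q).
Proof.
move=> U_gt0 p_ge0 up_le_q.
have u_gt0 := Rinv_0_lt_compat _ U_gt0; have ln2_gt0 := ln2_pos.
rewrite /kl_term /xlogx /log2; case: (Rlt_dec 0 p) => [p_gt0|p_le0] /=.
- have q_gt0 : 0 < q by have := Rmult_lt_0_compat _ _ u_gt0 p_gt0; lra.
  have upq_gt0 : 0 < / U * p / q.
    by apply: Rdiv_lt_0_compat => //; apply: Rmult_lt_0_compat.
  case: (Rle_dec (/ U * p / q) 0) => [upq_le0|_] /=; first lra.
  have ln_joint : ln (/ U * p / q) = ln p - ln q - ln U.
    by rewrite ln_div ?ln_mult ?ln_Rinv //; [ring | apply: Rmult_lt_0_compat].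
  by rewrite ln_joint ln_div //; field; lra.
- have -> : p = 0 by lra.
  rewrite Rmult_0_r /Rdiv Rmult_0_l.
  by case: (Rle_dec 0 0) => [_|] /=; [ring | lra].
Qed.

Lemma entropy_unif (T : finType) : 0 < INR #|T| -> entropy (@unif T) = log2 (INR #|T|).
Proof.
move=> T_gt0; have := Rinv_0_lt_compat _ T_gt0 => u_gt0.
rewrite /entropy /rsum /unif /xlogx; case: (Rle_dec (/ INR #|T|) 0) => [u_le0|_] /=; first lra.
by rewrite sumR_uniform // /log2 ln_Rinv // /Rdiv; ring.
Qed.

Definition supported_words (Sigma : finZmodType) (N : nat) (S : {set 'I_N})
  : {set word Sigma N} := [set v | restrict S v == v].

Lemma restrictK (Sigma : finZmodType) (N : nat) (S : {set 'I_N}) (c : word Sigma N) :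
  restrict S (restrict S c) = restrict S c.
Proof. by apply/ffunP => i; rewrite !ffunE; case: ifP => // ->. Qed.

Lemma restrict_supported (Sigma : finZmodType) (N : nat) (S : {set 'I_N})
  (c : word Sigma N) : restrict S c \in supported_words Sigma S.
Proof. by rewrite inE restrictK. Qed.

Lemma INR_expn (a n : nat) : INR (expn a n) = INR a ^ n.
Proof. by elim: n => [|n IH] //=; rewrite expnS mult_INR IH. Qed.

(* A supported word is determined by its |S| coordinates in S. *)
Lemma card_supported_words (Sigma : finZmodType) (N : nat) (S : {set 'I_N}) :
  INR #|supported_words Sigma S| <= INR #|Sigma| ^ #|S|.
Proof.
rewrite -INR_expn; apply: le_INR; apply/leP.
rewrite -(card_pffun_on (GRing.zero : Sigma) S (predT : pred Sigma)).
apply: subset_leq_card; apply/subsetP => v; rewrite inE => /eqP v_supp.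
apply/pffun_onP; split => //; apply/subsetP => i; rewrite inE => v_i.
apply/negPn/negP => i_notin; move: v_i.
by rewrite -v_supp ffunE (negbTE i_notin) eqxx.
Qed.

(* The zero word is supported in S, so there is at least one supported word. *)
Lemma supported_words_ge1 (Sigma : finZmodType) (N : nat) (S : {set 'I_N}) :
  1 <= INR #|supported_words Sigma S|.
Proof.
have : (0 < #|supported_words Sigma S|)%nat.
  by apply/card_gt0P; exists (restrict S [ffun => GRing.zero]); apply: restrict_supported.
by move/leP/le_INR.
Qed.

Section Views.
Variables (Sigma : finZmodType) (N : nat) (Msg : finType).
Variables (Enc : Msg -> word Sigma N -> R) (S : {set 'I_N}).
Hypothesis Enc_pmf : forall m, is_pmf (Enc m).
Hypothesis Msg_gt0 : 0 < INR #|Msg|.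

Local Notation view := (view_dist Enc S).
Local Notation mix := (marg2 (joint_MC Enc S)).
Local Notation u := (/ INR #|Msg|).

Lemma mixE v : mix v = \big[Rplus/R0]_(m : Msg) (u * view m v).
Proof. by []. Qed.

Lemma view_ge0 m v : 0 <= view m v.
Proof. by apply: sumR_ge0 => c _; case: (Enc_pmf m). Qed.

Lemma view_sum1 m : rsum (view m) = 1.
Proof.
case: (Enc_pmf m) => _; rewrite /rsum /view_dist => <-.
by rewrite [in RHS](partition_big (restrict S) predT).
Qed.

Lemma view_le1 m v : view m v <= 1.
Proof.
rewrite -(view_sum1 m) /rsum (bigD1 v) //= -{1}[view m v]Rplus_0_r.
by apply: Rplus_le_compat_l; apply: sumR_ge0 => w _; apply: view_ge0.
Qed.

Lemma view_supported m v : view m v <> 0 -> v \in supported_words Sigma S.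
Proof.
move=> view_nz; apply/negPn/negP => v_out; apply: view_nz.
rewrite /view_dist big1 // => c /eqP restr_c.
by move: v_out; rewrite -restr_c restrict_supported.
Qed.

Lemma u_view_ge0 m v : 0 <= u * view m v.
Proof. by apply: Rmult_le_pos; [exact/Rlt_le/Rinv_0_lt_compat | apply: view_ge0]. Qed.

Lemma mix_ge_view m v : u * view m v <= mix v.
Proof.
rewrite mixE (bigD1 m) //= -{1}[u * view m v]Rplus_0_r.
by apply: Rplus_le_compat_l; apply: sumR_ge0 => m' _; apply: u_view_ge0.
Qed.

Lemma mix_ge0 v : 0 <= mix v.
Proof. by apply: sumR_ge0 => m _; apply: u_view_ge0. Qed.

Lemma mix_sum1 : \big[Rplus/R0]_(v : word Sigma N) mix v = 1.
Proof.
rewrite (eq_bigr _ (fun v _ => mixE v)) exchange_big /=.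
rewrite (eq_bigr (fun _ => u * 1)) ?sumR_uniform // => m _.
by rewrite sumR_mull; have := view_sum1 m; rewrite /rsum => ->.
Qed.

(* I(M; C_S) in nats: the average over m of the divergence D(view m || mix). *)
Definition info_nats : R :=
  \big[Rplus/R0]_(v : word Sigma N) \big[Rplus/R0]_(m : Msg) (u * kl_term (view m v) (mix v)).

Lemma mutual_info_nats :
  entropy (@unif Msg) - cond_entropy (joint_MC Enc S) = / ln 2 * info_nats.
Proof.
rewrite entropy_unif // /cond_entropy /entropy /rsum /info_nats.
rewrite -[log2 _]Rmult_1_r -mix_sum1 -!sumR_mull /Rminus -sumR_opp -big_split /=.
apply: eq_bigr => v _.
transitivity (\big[Rplus/R0]_(m : Msg) (log2 (INR #|Msg|) * (u * view m v) +
                 mix v * xlogx (joint_MC Enc S m v / mix v))).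
  rewrite big_split /= (sumR_mull (mix v)); congr (_ + _); [by rewrite sumR_mull | ring].
rewrite -sumR_mull; apply: eq_bigr => m _.
by rewrite /joint_MC /unif; apply: entropy_term => //; [apply: view_ge0 | apply: mix_ge_view].
Qed.

(* By secrecy, view m exceeds the mixture by a total mass of at most eps:
   view m - mix is the average of the differences view m - view m'. *)
Lemma view_excess_le eps m :
  (forall m m', stat_dist (view m) (view m') <= eps) ->
  \big[Rplus/R0]_(v : word Sigma N) Rmax (view m v - mix v) 0 <= eps.
Proof.
move=> secret; have u_ge0 : 0 <= u by exact/Rlt_le/Rinv_0_lt_compat.
apply: (@Rle_trans _ (\big[Rplus/R0]_(v : word Sigma N) \big[Rplus/R0]_(m' : Msg)
                         (u * Rmax (view m v - view m' v) 0))).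
  apply: sumR_le => v _.
  have -> : view m v - mix v = \big[Rplus/R0]_(m' : Msg) (u * (view m v - view m' v)).
    rewrite (eq_bigr (fun m' => u * view m v - u * view m' v)); last by move=> m' _; ring.
    by rewrite sumR_sub sumR_uniform.
  apply: Rle_trans (sumR_pos_part _) _; apply: sumR_le => m' _.
  by rewrite -{1}(Rmult_0_r u) RmaxRmult //; apply: Rle_refl.
rewrite exchange_big /=.
apply: (@Rle_trans _ (\big[Rplus/R0]_(m' : Msg) (u * eps))); last by rewrite sumR_uniform //; right.
apply: sumR_le => m' _; rewrite sumR_mull; apply: Rmult_le_compat_l => //.
by rewrite stat_dist_pos_part ?view_sum1.
Qed.

Lemma info_nats_indep : (forall m m' v, view m v = view m' v) -> info_nats = 0.
Proof.
move=> indep; rewrite /info_nats big1 // => v _; rewrite big1 // => m _.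
have -> : mix v = view m v.
  rewrite mixE (eq_bigr (fun _ => u * view m v)) ?sumR_uniform // => m' _.
  by rewrite (indep m' m).
rewrite /kl_term; case: (Rlt_dec 0 (view m v)) => [view_gt0|_] /=; last ring.
by rewrite /Rdiv Rinv_r ?ln_1; [ring | lra].
Qed.

Lemma split_cost_le eps L C :
  (forall m m', stat_dist (view m) (view m') <= eps) -> 0 <= L -> 0 <= C ->
  \big[Rplus/R0]_(v : word Sigma N) \big[Rplus/R0]_(m : Msg)
    (u * (Rmin (view m v) (mix v) * L + Rmax (view m v - mix v) 0 * C)) <= L + eps * C.
Proof.
move=> secret L_ge0 C_ge0; rewrite exchange_big /=.
apply: (@Rle_trans _ (\big[Rplus/R0]_(m : Msg) (u * (L + eps * C)))); last first.
  by rewrite sumR_uniform //; right.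
apply: sumR_le => m _; rewrite sumR_mull; apply: Rmult_le_compat_l.
  exact/Rlt_le/Rinv_0_lt_compat.
rewrite big_split /=; apply: Rplus_le_compat.
- rewrite (eq_bigr (fun v => L * Rmin (view m v) (mix v))); last by move=> v _; ring.
  rewrite sumR_mull -[X in _ <= X]Rmult_1_r; apply: Rmult_le_compat_l => //.
  by rewrite -(view_sum1 m); apply: sumR_le => v _; apply: Rmin_l.
- rewrite (eq_bigr (fun v => C * Rmax (view m v - mix v) 0)); last by move=> v _; ring.
  by rewrite sumR_mull Rmult_comm; apply: Rmult_le_compat_r => //; apply: view_excess_le.
Qed.

Definition smoothed (eps : R) (v : word Sigma N) : R :=
  (1 - eps) * mix v +
  (if v \in supported_words Sigma S then eps / INR #|supported_words Sigma S| else 0).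

Lemma smoothed_ge_mix eps v : 0 < eps -> (1 - eps) * mix v <= smoothed eps v.
Proof.
move=> eps_gt0; have K_gt0 : 0 < INR #|supported_words Sigma S|.
  by have := supported_words_ge1 Sigma S; lra.
have unif_gt0 := Rdiv_lt_0_compat _ _ eps_gt0 K_gt0.
by rewrite /smoothed; case: ifP => _; lra.
Qed.

Lemma smoothed_ge0 eps v : 0 < eps < 1 -> 0 <= smoothed eps v.
Proof.
move=> eps_bd; have mix_v := mix_ge0 v.
have ge_mix := smoothed_ge_mix v (proj1 eps_bd); nra.
Qed.

Lemma smoothed_sum1 eps : \big[Rplus/R0]_(v : word Sigma N) smoothed eps v = 1.
Proof.
have K_ge1 := supported_words_ge1 Sigma S.
rewrite big_split /= sumR_mull mix_sum1 -big_mkcond /=.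
transitivity ((1 - eps) * 1 + INR #|supported_words Sigma S| * (eps / INR #|supported_words Sigma S|)).
  by rewrite sumR_const.
by field; lra.
Qed.

(* Moving the reference point from mix to the smoothed law costs nothing on
   average, since both are distributions (mul_ratio_sub1_le). *)
Lemma change_ref_cost_le eps : 0 < eps < 1 ->
  \big[Rplus/R0]_(v : word Sigma N) \big[Rplus/R0]_(m : Msg)
    (u * (view m v * (smoothed eps v / mix v - 1))) <= 0.
Proof.
move=> eps_bd.
apply: (@Rle_trans _ (\big[Rplus/R0]_(v : word Sigma N) (smoothed eps v - mix v))); last first.
  by rewrite sumR_sub smoothed_sum1 mix_sum1; lra.
apply: sumR_le => v _.
rewrite (eq_bigr (fun m => (smoothed eps v / mix v - 1) * (u * view m v))); last first.
  by move=> m _; ring.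
rewrite sumR_mull -mixE Rmult_comm.
by apply: mul_ratio_sub1_le; [apply: mix_ge0 | apply: smoothed_ge0].
Qed.

Lemma info_nats_le eps :
  (forall m m', stat_dist (view m) (view m') <= eps) -> 0 < eps < 1 ->
  info_nats <= - ln (1 - eps) + eps * (1 + ln (INR #|supported_words Sigma S| / eps)).
Proof.
move=> secret eps_bd; have u_gt0 : 0 < u by apply: Rinv_0_lt_compat.
set K := INR #|supported_words Sigma S|; set L := - ln (1 - eps).
set C := 1 + ln (K / eps).
have K_ge1 : 1 <= K by apply: supported_words_ge1.
have L_ge0 : 0 <= L.
  have : ln (1 - eps) <= ln 1 by apply: ln_le_ln; lra.
  by rewrite ln_1 /L; lra.
have C_ge0 : 0 <= C.
  have : 1 <= K / eps by apply: le_div_r; lra.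
  by move=> /(ln_le_ln Rlt_0_1); rewrite ln_1 /C; lra.
have term_le m v : kl_term (view m v) (mix v) <=
    Rmin (view m v) (mix v) * L + Rmax (view m v - mix v) 0 * C +
    view m v * (smoothed eps v / mix v - 1).
  apply: kl_term_le; try lra.
  - by split; [apply: view_ge0 | apply: view_le1].
  - exact: mix_ge0.
  - move=> view_gt0; have := mix_ge_view m v.
    by have := Rmult_lt_0_compat _ _ u_gt0 view_gt0; lra.
  - by apply: smoothed_ge_mix; lra.
  - move=> view_gt0; have v_supp : v \in supported_words Sigma S.
      by apply: (view_supported (m := m)); lra.
    have mix_part : 0 <= (1 - eps) * mix v by apply: Rmult_le_pos; [lra | apply: mix_ge0].
    by rewrite /smoothed v_supp -/K; lra.
have total := Rplus_le_compat _ _ _ _ (split_cost_le secret L_ge0 C_ge0)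
                (change_ref_cost_le eps_bd).
apply: Rle_trans _ (Rle_trans _ _ _ total _); last lra.
rewrite /info_nats -big_split /=.
apply: sumR_le => v _; rewrite -big_split /=; apply: sumR_le => m _.
by rewrite -Rmult_plus_distr_l; apply: Rmult_le_compat_l; [exact: Rlt_le | apply: term_le].
Qed.

End Views.

Lemma view_dist_set0 (Sigma : finZmodType) (N : nat) (Msg : finType)
  (Enc : Msg -> word Sigma N -> R) :
  (forall m, rsum (Enc m) = 1) ->
  forall m m' v, view_dist Enc set0 m v = view_dist Enc set0 m' v.
Proof.
move=> Enc_sum1; pose z : word Sigma N := [ffun => GRing.zero].
have view0 m v : view_dist Enc set0 m v = if z == v then 1 else 0.
  rewrite /view_dist (eq_bigl (fun _ => z == v)); last first.
    by move=> c; congr (_ == v); apply/ffunP => i; rewrite !ffunE in_set0.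
  by case: (z == v); [exact: Enc_sum1 | rewrite big_pred0].
by move=> m m' v; rewrite !view0.
Qed.

(* From nats to bits: for eps <= e^-3 the constant term and -ln(1 - eps) are
   absorbed, giving the bound 2 eps n log2(A / eps) when K <= A^n. *)
Lemma nats_bound_to_bits X eps K A (n : nat) :
  0 < eps <= exp (-3) -> 1 <= K <= A ^ n -> 1 <= A -> (0 < n)%nat ->
  X <= - ln (1 - eps) + eps * (1 + ln (K / eps)) ->
  / ln 2 * X <= 2 * eps * INR n * log2 (A / eps).
Proof.
move=> eps_bd K_bd A_ge1 n_gt0 X_le.
have eps_le : eps <= / 4 := Rle_trans _ _ _ (proj2 eps_bd) exp_m3_le.
have ln_eps : ln eps <= -3 by rewrite -(ln_exp (-3)); apply: ln_le_ln; lra.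
have ln_A : 0 <= ln A by rewrite -ln_1; apply: ln_le_ln; lra.
have ln_K : ln K <= INR n * ln A.
  by rewrite -ln_pow; [apply: ln_le_ln; lra | lra].
have n_ge1 : 1 <= INR n by move/leP/le_INR: n_gt0.
have ln_1eps : - ln (1 - eps) <= 2 * eps by apply: neg_ln_one_minus_le; lra.
rewrite ln_div in X_le; try lra.
have nA_ge0 : 0 <= eps * (INR n * ln A) by apply: Rmult_le_pos; nra.
have big_n : 0 <= eps * (2 * INR n - 1) * (- ln eps - 3).
  by apply: Rmult_le_pos; [apply: Rmult_le_pos|]; lra.
have nats_le : X <= 2 * eps * INR n * (ln A - ln eps) by nra.
rewrite /log2 ln_div; try lra.
have -> : 2 * eps * INR n * ((ln A - ln eps) / ln 2) =
          / ln 2 * (2 * eps * INR n * (ln A - ln eps)) by field; have := ln2_pos; lra.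
by apply: Rmult_le_compat_l => //; apply/Rlt_le/Rinv_0_lt_compat/ln2_pos.
Qed.

Theorem mainTheorem2 :
  exists eps0 : R, 0 < eps0 /\
  forall (Sigma : finZmodType) (N : nat) (Msg : finType)
    (Enc : Msg -> word Sigma N -> R) (Dec : word Sigma N -> Msg)
    (rho_r rho_w eps delta : R),
    0 < INR #|Msg| ->
    0 <= rho_r <= 1 -> 0 <= rho_w <= 1 ->
    0 < eps -> eps <= eps0 -> 0 <= delta ->
    awtp_code Enc Dec rho_r rho_w eps delta ->
    forall (Sr1 Sr2 Sw1 Sw2 : {set 'I_N}) (rho : R),
      0 <= rho <= 1 ->
      INR #|Sr1| = rho_r * INR N -> INR #|Sr2| = rho_r * INR N ->
      INR #|Sw1| = rho_w * INR N -> INR #|Sw2| = rho_w * INR N ->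
      INR #|Sr1 :|: Sw1| = rho * INR N -> INR #|Sr2 :|: Sw2| = rho * INR N ->
      Sr1 :&: Sw2 = set0 ->
      entropy (@unif Msg) - cond_entropy (joint_MC Enc Sr1)
        <= 2 * eps * rho_r * INR N * log2 (INR #|Sigma| / eps).
Proof.
exists (exp (-3)); split; first exact: exp_pos.
move=> Sigma N Msg Enc Dec rho_r rho_w eps delta Msg_gt0 _ _ eps_gt0 eps_small _
  [Enc_pmf [secret _]] Sr1 _ _ _ _ _ Sr1_card _ _ _ _ _ _.
have secret1 m m' : stat_dist (view_dist Enc Sr1 m) (view_dist Enc Sr1 m') <= eps.
  by apply: secret; rewrite Sr1_card; lra.
rewrite (mutual_info_nats Sr1 Enc_pmf Msg_gt0).
have -> : 2 * eps * rho_r * INR N = 2 * eps * INR #|Sr1| by rewrite Sr1_card; ring.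
case: (posnP #|Sr1|) => [Sr1_0|Sr1_gt0].
  have -> : Sr1 = set0 by apply/eqP; rewrite -cards_eq0 Sr1_0.
  have indep := view_dist_set0 (fun m => proj2 (Enc_pmf m)).
  by rewrite info_nats_indep // cards0 /=; right; ring.
have Sigma_ge1 : 1 <= INR #|Sigma|.
  have : (0 < #|Sigma|)%nat by apply/card_gt0P; exists GRing.zero.
  by move/leP/le_INR.
apply: (nats_bound_to_bits (K := INR #|supported_words Sigma Sr1|)) => //.
- split; [exact: supported_words_ge1 | exact: card_supported_words].
- by apply: info_nats_le => //; have := exp_m3_le; lra.
Qed.
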